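(* Let $f:\mathbb{R}^d\to\mathbb{R}$ be subdifferentially polynomially bounded (SPB) with parameters $\mathrm{R}_1\ge 0$, $\mathrm{R}_2>0$ and integer $m\ge 0$. Then for all $x,y\in\mathbb{R}^d$, \[ |f(x)-f(y)|\le\big(2^{m-1}\mathrm{R}_1\|x\|^m+2^{m-1}\mathrm{R}_1\|y-x\|^m+\mathrm{R}_2\big)\|x-y\|. \]
   Context: $\|\cdot\|$ is the Euclidean norm. For a locally Lipschitz $f:\mathbb{R}^d\to\mathbb{R}$, $\partial_C f(x)$ denotes the Clarke subdifferential. $f$ is called SPB with parameters $\mathrm{R}_1\ge0$, $\mathrm{R}_2>0$ and integer $m\ge 0$ (where $\mathrm{R}_1=0$ if and only if $m=0$) if $f$ is locally Lipschitz and $\sup_{\zeta\in\partial_C f(x)}\|\zeta\|\le \mathrm{R}_1\|x\|^m+\mathrm{R}_2$ for all $x\in\mathbb{R}^d$. The convention $0^0=1$ is used. *)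

From HB Require Import structures.
From mathcomp Require Import all_boot all_order all_algebra.
From mathcomp Require Import all_classical all_reals ereal.
Set Implicit Arguments. Unset Strict Implicit. Unset Printing Implicit Defensive.
Import Order.TTheory GRing.Theory Num.Theory.
Local Open Scope classical_set_scope.
Local Open Scope ring_scope.

Definition edot (R : realType) (d : nat) (u v : 'rV[R]_d) : R :=
  \sum_(i < d) u ord0 i * v ord0 i.

Definition enorm (R : realType) (d : nat) (u : 'rV[R]_d) : R :=
  Num.sqrt (\sum_(i < d) u ord0 i ^+ 2).

Definition locally_lipschitz (R : realType) (d : nat) (f : 'rV[R]_d -> R) : Prop :=
  forall x : 'rV[R]_d, exists r : R, exists L : R, 0 < r /\
    forall y z : 'rV[R]_d, enorm (y - x) < r -> enorm (z - x) < r ->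
      `|f y - f z| <= L * enorm (y - z).

Definition clarke_quot (R : realType) (d : nat) (f : 'rV[R]_d -> R)
  (x v : 'rV[R]_d) (delta : R) : set (\bar R) :=
  [set z | exists y : 'rV[R]_d, exists t : R,
     [/\ enorm (y - x) < delta, 0 < t, t < delta &
         z = ((f (y + t *: v) - f y) / t)%:E]].

(* Clarke generalized directional derivative
   f°(x; v) = limsup_{y -> x, t downarrow 0} (f(y + t v) - f(y)) / t
            = inf_{delta > 0} sup_{|y - x| < delta, 0 < t < delta} ... *)
Definition clarke_dd (R : realType) (d : nat) (f : 'rV[R]_d -> R)
  (x v : 'rV[R]_d) : \bar R :=
  ereal_inf [set ereal_sup (clarke_quot f x v delta) | delta in [set e : R | 0 < e]].

Definition clarke_subdiff (R : realType) (d : nat) (f : 'rV[R]_d -> R)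
  (x : 'rV[R]_d) : set 'rV[R]_d :=
  [set zeta | forall v : 'rV[R]_d, ((edot zeta v)%:E <= clarke_dd f x v)%E].

Definition SPB (R : realType) (d : nat) (f : 'rV[R]_d -> R)
  (R1 R2 : R) (m : nat) : Prop :=
  [/\ 0 <= R1, 0 < R2, (R1 = 0 <-> m = 0%N), locally_lipschitz f &
      forall x : 'rV[R]_d, forall zeta, clarke_subdiff f x zeta ->
        enorm zeta <= R1 * enorm x ^+ m + R2].

(* Rolle's argument applied to t |-> f (x + t (y - x)) - t (f y - f x) gives a point z
   of the segment [x, y] with f y - f x <= f°(z; y - x), where f° is the Clarke
   directional derivative.  As f°(z; .) is sublinear, a finite-dimensional Hahn-Banach
   argument gives zeta with <zeta, .> <= f°(z; .) and equality at y - x; such zeta lies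
   in the Clarke subdifferential at z, so f°(z; y - x) <= (R1 |z|^m + R2) |y - x|, and
   convexity of s |-> s^m bounds |z|^m <= (|x| + |y - x|)^m by 2^(m-1) (|x|^m + |y - x|^m).
   For Hahn-Banach, a sublinear q is replaced by w |-> inf_(t >= 0) q (w + t u) - t q u
   successively for u = y - x and for each basis vector u: this keeps q sublinear and
   the value q u, lowers q, and makes it linear along u and along every direction
   along which it was already linear, so the final function is linear. *)

From HB Require Import structures.
From mathcomp Require Import all_boot all_order all_algebra.
From mathcomp Require Import all_classical all_reals ereal.
From mathcomp Require Import topology normedtype derive.
From mathcomp Require Import ring lra.
Import Order.TTheory GRing.Theory Num.Theory.
Import numFieldNormedType.Exports.
Set Implicit Arguments. Unset Strict Implicit. Unset Printing Implicit Defensive.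
Local Open Scope classical_set_scope.
Local Open Scope ring_scope.

Lemma exprDn_convex (R : realFieldType) (a b : R) (m : nat) : 0 <= a -> 0 <= b ->
  (a + b) ^+ m <= 2 ^+ m / 2 * (a ^+ m + b ^+ m).
Proof.
move=> a0 b0; elim: m => [|m IH]; first by rewrite !expr0; lra.
have chebyshev : (a + b) * (a ^+ m + b ^+ m) <= 2 * (a ^+ m.+1 + b ^+ m.+1).
  have [ab|/ltW ba] := lerP a b.
    have : a ^+ m <= b ^+ m by rewrite lerXn2r.
    by rewrite !exprS; nra.
  have : b ^+ m <= a ^+ m by rewrite lerXn2r.
  by rewrite !exprS; nra.
rewrite exprS; apply: le_trans (ler_wpM2l (addr_ge0 a0 b0) IH) _.
rewrite mulrCA (_ : 2 ^+ m.+1 / 2 * _ = 2 ^+ m / 2 * (2 * (a ^+ m.+1 + b ^+ m.+1))).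
  by apply: ler_wpM2l => //; rewrite divr_ge0 ?exprn_ge0.
by rewrite exprS; ring.
Qed.

Lemma exists_pos_lt2 (R : realFieldType) (a b : R) : 0 < a -> 0 < b ->
  exists2 c, 0 < c & c < a /\ c < b.
Proof.
move=> a0 b0; have [ab|ba] := leP a b; first by exists (a / 2); lra.
by exists (b / 2); lra.
Qed.

Lemma sub_line_points (R : ringType) (V : lmodType R) (a v : V) (s s' : R) :
  a + s *: v - (a + s' *: v) = (s - s') *: v.
Proof. by rewrite opprD addrACA subrr add0r -scalerBl. Qed.

Section EuclideanNorm.
Variables (R : realType) (d : nat).
Implicit Types u w : 'rV[R]_d.

Definition esqnorm u : R := \sum_(i < d) u ord0 i ^+ 2.

Lemma esqnorm_ge0 u : 0 <= esqnorm u.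
Proof. by apply: sumr_ge0 => i _; exact: sqr_ge0. Qed.

Lemma enorm_ge0 u : 0 <= enorm u.
Proof. exact: sqrtr_ge0. Qed.

Lemma sqr_enorm u : enorm u ^+ 2 = esqnorm u.
Proof. by rewrite sqr_sqrtr // esqnorm_ge0. Qed.

Lemma esqnorm_eq0 u : esqnorm u = 0 -> forall i, u ord0 i = 0.
Proof.
move=> u0 i; apply/eqP; rewrite -sqrf_eq0; apply/eqP.
by apply: (psumr_eq0P (P := predT) _ u0) => // j _; exact: sqr_ge0.
Qed.

Lemma edot_sqr_le u w : edot u w ^+ 2 <= esqnorm u * esqnorm w.
Proof.
have [u0|uN0] := eqVneq (esqnorm u) 0.
  rewrite /edot big1 ?expr0n ?u0 ?mul0r //= => i _.
  by rewrite (esqnorm_eq0 u0) mul0r.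
have A0 : 0 < esqnorm u by rewrite lt0r uN0 esqnorm_ge0.
set A := esqnorm u; set B := esqnorm w; set D := edot u w.
have expand : \sum_(i < d) (D / A * u ord0 i - w ord0 i) ^+ 2 = (A * B - D ^+ 2) / A.
  rewrite [RHS](_ : _ = (D / A) ^+ 2 * A - 2 * (D / A) * D + B); last first.
    by field; rewrite gt_eqF.
  rewrite /A /B /D /esqnorm /edot !mulr_sumr -sumrB -big_split /=.
  by apply: eq_bigr => i _; ring.
have : 0 <= (A * B - D ^+ 2) / A.
  by rewrite -expand; apply: sumr_ge0 => i _; exact: sqr_ge0.
by rewrite pmulr_lge0 ?invr_gt0 // subr_ge0.
Qed.

Lemma edot_le_enorm u w : edot u w <= enorm u * enorm w.
Proof.
have := edot_sqr_le u w; rewrite -!sqr_enorm -exprMn.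
have := mulr_ge0 (enorm_ge0 u) (enorm_ge0 w).
have [D0 ab0|D0 ab0] := lerP (edot u w) 0; first by move=> _; exact: le_trans ab0.
by rewrite ler_pXn2r // nnegrE ltW.
Qed.

Lemma enormD u w : enorm (u + w) <= enorm u + enorm w.
Proof.
have expand : esqnorm (u + w) = esqnorm u + 2 * edot u w + esqnorm w.
  rewrite /esqnorm /edot mulr_sumr -!big_split /=; apply: eq_bigr => i _.
  by rewrite mxE; ring.
rewrite -(@ler_pXn2r _ 2) ?nnegrE ?addr_ge0 ?enorm_ge0 //.
rewrite sqr_enorm expand sqrrD !sqr_enorm mulr2n mulrDl mul1r.
have := edot_le_enorm u w; lra.
Qed.

Lemma enormZ (k : R) u : enorm (k *: u) = `|k| * enorm u.
Proof.
rewrite /enorm -sqrtr_sqr -sqrtrM ?sqr_ge0 //; congr Num.sqrt.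
by rewrite mulr_sumr; apply: eq_bigr => i _; rewrite mxE; ring.
Qed.

Lemma enorm0 : enorm (0 : 'rV[R]_d) = 0.
Proof. by rewrite -(scale0r (0 : 'rV[R]_d)) enormZ normr0 mul0r. Qed.

Lemma enormB u w : enorm (u - w) = enorm (w - u).
Proof. by rewrite -opprB -scaleN1r enormZ normrN normr1 mul1r. Qed.

Lemma enorm_shift_lt (y z w : 'rV[R]_d) c t :
  enorm (y - z) < c -> 0 < t -> t < c -> enorm (y + t *: w - z) < c * (1 + enorm w).
Proof.
move=> yz t0 tc; rewrite addrAC; apply: le_lt_trans (enormD _ _) _.
by rewrite enormZ gtr0_norm //; have := enorm_ge0 w; nra.
Qed.

Lemma enorm_segment_expn (x w : 'rV[R]_d) s m : 0 <= s <= 1 ->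
  enorm (x + s *: w) ^+ m <= 2 ^+ m / 2 * (enorm x ^+ m + enorm w ^+ m).
Proof.
case/andP=> s0 s1; apply: le_trans (exprDn_convex _ (enorm_ge0 x) (enorm_ge0 w)).
rewrite lerXn2r ?nnegrE ?addr_ge0 ?enorm_ge0 //; apply: le_trans (enormD _ _) _.
by rewrite enormZ ger0_norm // lerD2l ler_piMl ?enorm_ge0.
Qed.

End EuclideanNorm.

Section Sublinear.
Variables (R : realType) (V : lmodType R).
Implicit Types (q : V -> R) (u w : V).

Definition sublinear q :=
  (forall a b, q (a + b) <= q a + q b) /\ (forall t a, 0 <= t -> q (t *: a) = t * q a).

Definition linear_along q u := q (- u) = - q u.

Lemma sublinear0 q : sublinear q -> q 0 = 0.
Proof. by case=> _ qZ; rewrite -(scale0r (0 : V)) qZ // mul0r. Qed.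

Lemma linear_alongD q u : sublinear q -> linear_along q u ->
  forall w s, q (w + s *: u) = q w + s * q u.
Proof.
move=> [qD qZ] qN w s.
have [s0|/ltW s0] := lerP 0 s.
  have up := qD w (s *: u); have down := qD (w + s *: u) (s *: - u).
  rewrite qZ // in up; rewrite qZ // qN scalerN addrK in down; lra.
have sN : s *: u = (- s) *: (- u) by rewrite scaleNr scalerN opprK.
have up := qD w ((- s) *: (- u)); have down := qD (w + s *: u) ((- s) *: u).
rewrite qZ ?oppr_ge0 // qN -sN in up.
rewrite qZ ?oppr_ge0 // scaleNr addrK in down; lra.
Qed.

Definition linearize q u w : R :=
  inf [set q (w + t *: u) - t * q u | t in [set t : R | 0 <= t]].

Section Linearize.
Variables (q : V -> R) (u : V).
Hypothesis qS : sublinear q.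

Lemma linearize_le w t : 0 <= t -> linearize q u w <= q (w + t *: u) - t * q u.
Proof.
have [qD qZ] := qS; move=> t0; apply: ge_inf; last by exists t.
exists (- q (- w)) => _ [s s0 <-].
by have := qD (w + s *: u) (- w); rewrite addrC addKr qZ //; lra.
Qed.

Lemma linearize_ge w x :
  (forall t, 0 <= t -> x <= q (w + t *: u) - t * q u) -> x <= linearize q u w.
Proof.
move=> h; apply: lb_le_inf; first by exists (q (w + 0 *: u) - 0 * q u), 0 => //=.
by move=> _ [t t0 <-]; exact: h.
Qed.

Lemma linearize_le_self w : linearize q u w <= q w.
Proof. by have := linearize_le w (lexx 0); rewrite scale0r addr0 mul0r subr0. Qed.

Lemma linearizeD a b : linearize q u (a + b) <= linearize q u a + linearize q u b.
Proof.
have [qD _] := qS.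
suff : forall s t, 0 <= s -> 0 <= t ->
    linearize q u (a + b) - (q (b + t *: u) - t * q u) <= q (a + s *: u) - s * q u.
  move=> h.
  have hb s : 0 <= s -> linearize q u (a + b) - (q (a + s *: u) - s * q u) <= linearize q u b.
    by move=> s0; apply: linearize_ge => t t0; have := h s t s0 t0; lra.
  suff : linearize q u (a + b) - linearize q u b <= linearize q u a by lra.
  by apply: linearize_ge => s s0; have := hb s s0; lra.
move=> s t s0 t0; have := linearize_le (a + b) (addr_ge0 s0 t0).
have := qD (a + s *: u) (b + t *: u).
rewrite (_ : a + s *: u + (b + t *: u) = a + b + (s + t) *: u); last first.
  by rewrite scalerDl addrACA.
lra.
Qed.

Lemma linearizeZ t a : 0 <= t -> linearize q u (t *: a) = t * linearize q u a.
Proof.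
have [_ qZ] := qS; rewrite le0r => /orP[/eqP->|t0].
  rewrite scale0r mul0r; apply/eqP; rewrite eq_le; apply/andP; split.
    by have := linearize_le 0 (lexx 0); rewrite scale0r addr0 mul0r subr0 (sublinear0 qS).
  by apply: linearize_ge => s s0; rewrite add0r qZ //; lra.
apply/eqP; rewrite eq_le; apply/andP; split.
  rewrite mulrC -ler_pdivrMr //; apply: linearize_ge => s s0; rewrite ler_pdivrMr //.
  have := linearize_le (t *: a) (mulr_ge0 (ltW t0) s0).
  by rewrite -scalerA -scalerDr qZ ?(ltW t0) //; lra.
apply: linearize_ge => s s0.
have := linearize_le a (divr_ge0 s0 (ltW t0)).
rewrite -(ler_pM2l t0) => h; apply: le_trans h _.
have -> : t *: a + s *: u = t *: (a + (s / t) *: u).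
  by rewrite scalerDr scalerA mulrCA divff ?gt_eqF // mulr1.
by rewrite qZ ?(ltW t0) // mulrBr mulrA mulrCA divff ?gt_eqF // mulr1.
Qed.

Lemma sublinear_linearize : sublinear (linearize q u).
Proof. by split; [exact: linearizeD | exact: linearizeZ]. Qed.

Lemma linearize_self : linearize q u u = q u.
Proof.
have [_ qZ] := qS; apply/eqP; rewrite eq_le linearize_le_self /=.
apply: linearize_ge => t t0.
have -> : u + t *: u = (1 + t) *: u by rewrite scalerDl scale1r.
by rewrite qZ ?addr_ge0 //; lra.
Qed.

Lemma linear_along_linearize : linear_along (linearize q u) u.
Proof.
have [qD qZ] := qS; rewrite /linear_along linearize_self.
apply/eqP; rewrite eq_le; apply/andP; split.
  by have := linearize_le (- u) ler01; rewrite scale1r addNr sublinear0 //; lra.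
apply: linearize_ge => t t0.
have := qD (- u + t *: u) u; rewrite addrAC addNr add0r qZ //; lra.
Qed.

Lemma linearize_linear_along u0 : linear_along q u0 ->
  linearize q u u0 = q u0 /\ linear_along (linearize q u) u0.
Proof.
move=> qN.
have shift w s : linearize q u (w + s *: u0) = linearize q u w + s * q u0.
  apply/eqP; rewrite eq_le; apply/andP; split.
    rewrite -lerBlDr; apply: linearize_ge => t t0.
    have := linearize_le (w + s *: u0) t0.
    by rewrite addrAC (linear_alongD qS qN); lra.
  apply: linearize_ge => t t0.
  have := linearize_le w t0; have := linear_alongD qS qN (w + t *: u) s.
  by rewrite addrAC; lra.
have lin0 : linearize q u 0 = 0 by exact: sublinear0 sublinear_linearize.
have := shift 0 1; have := shift 0 (-1).
rewrite !add0r scale1r scaleN1r lin0 mul1r mulN1r !add0r => qNu0 qu0.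
by split => //; rewrite /linear_along qNu0 qu0.
Qed.

End Linearize.

Lemma foldl_linearize (l : seq V) q : sublinear q ->
  let Q := foldl linearize q l in
  [/\ sublinear Q, forall w, Q w <= q w,
      forall u, linear_along q u -> Q u = q u /\ linear_along Q u &
      forall u, u \in l -> linear_along Q u].
Proof.
elim: l q => [|u l IHl] q qS /=; first by split=> // w; exact: lexx.
have [QS Qle Qkeep Qlin] := IHl _ (sublinear_linearize u qS).
split=> //.
- by move=> w; apply: le_trans (Qle w) _; exact: linearize_le_self.
- move=> u0 /(linearize_linear_along u qS) [qu0 qN].
  by have [-> ?] := Qkeep u0 qN.
- move=> u0; rewrite inE => /predU1P[->|]; last exact: Qlin.
  by have [] := Qkeep u (linear_along_linearize u qS).
Qed.

End Sublinear.

Section HahnBanach.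
Variables (R : realType) (d : nat).
Implicit Types (q : 'rV[R]_d -> R) (v w : 'rV[R]_d).

Lemma sublinear_linear_along_basisE q : sublinear q ->
  (forall i, linear_along q (delta_mx 0 i)) ->
  forall w, q w = edot (\row_i q (delta_mx 0 i)) w.
Proof.
move=> qS qN w; rewrite {1}(row_sum_delta w).
have -> : forall r : seq 'I_d, q (\sum_(i <- r) w 0 i *: delta_mx 0 i) =
    \sum_(i <- r) w 0 i * q (delta_mx 0 i).
  elim=> [|i r IHr]; first by rewrite !big_nil (sublinear0 qS).
  by rewrite !big_cons addrC (linear_alongD qS) // IHr addrC.
by rewrite /edot; apply: eq_bigr => i _; rewrite mxE mulrC.
Qed.

Lemma hahn_banach_rV q v : sublinear q ->
  exists zeta, (forall w, edot zeta w <= q w) /\ edot zeta v = q v.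
Proof.
move=> qS; have qvS := sublinear_linearize v qS.
have [QS Qle Qkeep Qlin] := foldl_linearize [seq delta_mx 0 i | i : 'I_d] qvS.
set Q := foldl _ _ _ in QS Qle Qkeep Qlin.
have QN i : linear_along Q (delta_mx 0 i) by apply/Qlin/map_f; rewrite mem_enum.
exists (\row_i Q (delta_mx 0 i)); split=> [w|]; rewrite -sublinear_linear_along_basisE //.
  exact: le_trans (Qle w) (linearize_le_self _ qS _).
by have [-> _] := Qkeep v (linear_along_linearize v qS); rewrite linearize_self.
Qed.

End HahnBanach.

Section ClarkeDerivative.
Variables (R : realType) (d : nat) (f : 'rV[R]_d -> R).
Hypothesis f_lip : locally_lipschitz f.
Implicit Types (y z v w : 'rV[R]_d) (t : R).

Definition diff_quot y t w := (f (y + t *: w) - f y) / t.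

Definition clarke_upper z w : set R := [set a | exists2 del, 0 < del &
  forall y t, enorm (y - z) < del -> 0 < t -> t < del -> diff_quot y t w <= a].

(* [clarke_dd f z w] as a real number; local Lipschitz continuity keeps it finite. *)
Definition clarke_ddr z w := inf (clarke_upper z w).

Lemma diff_quot_bounded z w : exists del L, 0 < del /\
  forall y t, enorm (y - z) < del -> 0 < t -> t < del -> `|diff_quot y t w| <= L * enorm w.
Proof.
have [r [L [r0 fL]]] := f_lip z; have w0 := enorm_ge0 w.
exists (r / (1 + enorm w)), L; split=> [|y t yz t0 tr]; first by rewrite divr_gt0 //; lra.
have r_le : r / (1 + enorm w) <= r by rewrite ler_pdivrMr; nra.
have r_eq : r / (1 + enorm w) * (1 + enorm w) = r by rewrite divfK // lt0r_neq0 //; lra.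
have := enorm_shift_lt w yz t0 tr; rewrite r_eq.
move=> /fL /(_ (lt_le_trans yz r_le)); rewrite addrAC subrr add0r enormZ (gtr0_norm t0).
by rewrite /diff_quot normrM normfV (gtr0_norm t0) ler_pdivrMr // mulrCA mulrC.
Qed.

Lemma clarke_upper_bounded z w :
  nonempty (clarke_upper z w) /\ has_lbound (clarke_upper z w).
Proof.
have [del [L [del0 qL]]] := diff_quot_bounded z w.
split.
  exists (L * enorm w), del => // y t yz t0 td.
  exact: le_trans (ler_norm _) (qL y t yz t0 td).
exists (- (L * enorm w)) => a [e e0 qa].
have [c c0 [cd ce]] := exists_pos_lt2 del0 e0.
have zz : enorm (z - z) = 0 by rewrite subrr enorm0.
have := qa z c ltac:(lra) c0 ce; have := qL z c ltac:(lra) c0 cd.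
by rewrite ler_norml => /andP[+ _]; lra.
Qed.

Lemma clarke_ddr_le z w a : clarke_upper z w a -> clarke_ddr z w <= a.
Proof. by move=> za; apply: ge_inf => //; exact: (clarke_upper_bounded z w).2. Qed.

Lemma clarke_ddr_ge z w x : (forall a, clarke_upper z w a -> x <= a) -> x <= clarke_ddr z w.
Proof. by move=> h; apply: lb_le_inf => //; exact: (clarke_upper_bounded z w).1. Qed.

Lemma clarke_upperD z u w a b :
  clarke_upper z u a -> clarke_upper z w b -> clarke_upper z (u + w) (a + b).
Proof.
move=> [d1 d10 qa] [d2 d20 qb]; have u0 := enorm_ge0 u.
have u1 : 0 < 1 + enorm u by lra.
have [c c0 [cd1 cd2]] := exists_pos_lt2 d10 (divr_gt0 d20 u1).
have cu_d2 : c * (1 + enorm u) < d2 by rewrite -ltr_pdivlMr.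
have d2_le : d2 / (1 + enorm u) <= d2 by rewrite ler_pdivrMr //; nra.
exists c => // y t yz t0 tc.
have yu := lt_trans (enorm_shift_lt u yz t0 tc) cu_d2.
have -> : diff_quot y t (u + w) = diff_quot (y + t *: u) t w + diff_quot y t u.
  by rewrite /diff_quot scalerDr addrA; field; rewrite gt_eqF.
have := qa y t ltac:(lra) t0 ltac:(lra); have := qb _ t yu t0 ltac:(lra); lra.
Qed.

Lemma clarke_upperZ z w a t :
  0 < t -> clarke_upper z w a -> clarke_upper z (t *: w) (t * a).
Proof.
move=> t0 [e e0 qa]; have [c c0 [ce cet]] := exists_pos_lt2 e0 (divr_gt0 e0 t0).
exists c => // y s yz s0 sc.
have st_e : s * t < e by rewrite -ltr_pdivlMr //; lra.
have -> : diff_quot y s (t *: w) = t * diff_quot y (s * t) w.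
  by rewrite /diff_quot scalerA; field; rewrite !gt_eqF.
by rewrite ler_pM2l // qa ?mulr_gt0 //; lra.
Qed.

Lemma clarke_ddrZ_le z w t : 0 < t -> clarke_ddr z (t *: w) <= t * clarke_ddr z w.
Proof.
move=> t0; rewrite mulrC -ler_pdivrMr //; apply: clarke_ddr_ge => a za.
by rewrite ler_pdivrMr // mulrC; exact/clarke_ddr_le/clarke_upperZ.
Qed.

Lemma clarke_ddr0 z : clarke_ddr z 0 = 0.
Proof.
have quot0 y t : 0 < t -> diff_quot y t 0 = 0.
  by move=> t0; rewrite /diff_quot scaler0 addr0 subrr mul0r.
apply/eqP; rewrite eq_le; apply/andP; split.
  by apply: clarke_ddr_le; exists 1 => // y t _ t0 _; rewrite quot0.
apply: clarke_ddr_ge => a [e e0 qa].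
have := qa z (e / 2); rewrite subrr enorm0 quot0; last lra.
by apply; lra.
Qed.

Lemma clarke_ddr_sublinear z : sublinear (clarke_ddr z).
Proof.
split=> [u w|t w].
  have h b : clarke_upper z w b -> clarke_ddr z (u + w) - b <= clarke_ddr z u.
    move=> zb; apply: clarke_ddr_ge => a za.
    by have := clarke_ddr_le (clarke_upperD za zb); lra.
  suff : clarke_ddr z (u + w) - clarke_ddr z u <= clarke_ddr z w by lra.
  by apply: clarke_ddr_ge => b zb; have := h b zb; lra.
rewrite le0r => /orP[/eqP->|t0]; first by rewrite scale0r mul0r clarke_ddr0.
apply/eqP; rewrite eq_le clarke_ddrZ_le //=.
have := @clarke_ddrZ_le z (t *: w) t^-1; rewrite invr_gt0 => /(_ t0).
rewrite scalerA mulVf ?gt_eqF // scale1r.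
by rewrite -(ler_pM2l t0) mulrA divff ?gt_eqF // mul1r.
Qed.

Lemma clarke_ddr_le_dd z w : ((clarke_ddr z w)%:E <= clarke_dd f z w)%E.
Proof.
apply: le_ereal_inf_tmp => _ [del /= del0 <-].
have quot_in y t : enorm (y - z) < del -> 0 < t -> t < del ->
    clarke_quot f z w del (diff_quot y t w)%:E.
  by move=> yz t0 td; exists y, t.
have zz : enorm (z - z) < del by rewrite subrr enorm0.
case E: (ereal_sup _) => [s| |]; last 2 first.
- exact: leey.
- have := ereal_sup_ubound (quot_in z (del / 2) zz ltac:(lra) ltac:(lra)).
  by rewrite E.
rewrite lee_fin; apply: clarke_ddr_le; exists del => // y t yz t0 td.
by have := ereal_sup_ubound (quot_in y t yz t0 td); rewrite E lee_fin.
Qed.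

Lemma continuous_along_line a v : continuous (fun t : R => f (a + t *: v)).
Proof.
move=> t0; apply/cvgrPdist_lt => e e0.
have [r [L [r0 fL]]] := f_lip (a + t0 *: v).
set K := (1 + `|L|) * (1 + enorm v).
have [v0 L0] := (enorm_ge0 v, normr_ge0 L).
have [K1 vK] : 1 <= K /\ enorm v <= K by rewrite /K; split; nra.
have [eta eta0 [eta_r eta_e]] := exists_pos_lt2 (divr_gt0 r0 (lt_le_trans ltr01 K1))
  (divr_gt0 e0 (lt_le_trans ltr01 K1)).
apply/nbhs_normP; exists eta => //= t; rewrite /ball_ /= => tt0.
have K0 : 0 < K by lra.
have tt0_ge0 := normr_ge0 (t0 - t).
have dK : `|t0 - t| * K < r /\ `|t0 - t| * K < e.
  by rewrite -!ltr_pdivlMr //; split; lra.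
have t_near : enorm (a + t *: v - (a + t0 *: v)) < r.
  by rewrite sub_line_points enormZ distrC; apply: le_lt_trans dK.1; rewrite ler_wpM2l.
have := fL _ _ (_ : enorm (a + t0 *: v - (a + t0 *: v)) < r) t_near.
rewrite subrr enorm0 sub_line_points enormZ => /(_ r0) fle.
apply: le_lt_trans dK.2; apply: le_trans fle _.
apply: le_trans (ler_wpM2r (mulr_ge0 tt0_ge0 v0) (ler_norm L)) _.
by rewrite mulrCA ler_wpM2l // /K; nra.
Qed.

(* With [h] as below, [h 0 = h 1], so [h] attains its maximum over [[0, 1]] at some
   [ts > 0]; the backward difference quotients at [a + ts *: (b - a)] are then at
   least [f b - f a]. *)
Lemma clarke_mvt a b :
  exists2 s, 0 <= s <= 1 & f b - f a <= clarke_ddr (a + s *: (b - a)) (b - a).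
Proof.
set v := b - a; set c := f b - f a; pose h t := f (a + t *: v) - t * c.
have h_cont : continuous h.
  move=> t; apply: (@continuousB _ _ _ (fun t => f (a + t *: v)) ( *%R^~ c)).
    exact: continuous_along_line.
  exact: mulrr_continuous.
have [t1 t1_01 t1_max] := EVT_max ler01 (continuous_subspaceT h_cont).
have h01 : h 0 = h 1.
  have a1 : a + 1 *: v = b by rewrite scale1r addrC subrK.
  by rewrite /h a1 scale0r addr0 mul0r mul1r /c; ring.
pose ts := if t1 == 0 then 1 else t1.
have [ts0 ts1] : 0 < ts /\ ts <= 1.
  move: t1_01; rewrite in_itv /= /ts; case: eqP => [_|/eqP t1N0 /andP[t1_ge0 ->]].
    by rewrite lexx ltr01.
  by rewrite lt0r t1N0.
have ts_max t : 0 <= t <= 1 -> h t <= h ts.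
  move=> t01; rewrite /ts; case: eqP => [t10|_]; last by apply: t1_max; rewrite in_itv.
  by rewrite -h01 -t10; apply: t1_max; rewrite in_itv.
exists ts; first by rewrite ts1 ltW.
apply: clarke_ddr_ge => al [del del0 qal]; have v0 := enorm_ge0 v.
have v1 : 0 < 1 + enorm v by lra.
have [s s0 [s_ts s_del]] := exists_pos_lt2 ts0 (divr_gt0 del0 v1).
have sv_del : s * (1 + enorm v) < del by rewrite -ltr_pdivlMr.
pose y := a + (ts - s) *: v.
have y_near : enorm (y - (a + ts *: v)) < del.
  by rewrite sub_line_points enormZ addrAC subrr add0r normrN gtr0_norm //; nra.
have quot_ge : c <= diff_quot y s v.
  rewrite /diff_quot /y -addrA -scalerDl subrK ler_pdivlMr // mulrC.
  by have := ts_max (ts - s) ltac:(lra); rewrite /h; lra.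
by apply: le_trans quot_ge (qal y s y_near s0 _); nra.
Qed.

Lemma clarke_ddr_le_subdiff_bound z M :
  (forall zeta, clarke_subdiff f z zeta -> enorm zeta <= M) ->
  forall v, clarke_ddr z v <= M * enorm v.
Proof.
move=> zetaM v; have [zeta [zeta_le <-]] := hahn_banach_rV v (clarke_ddr_sublinear z).
have zeta_sub : clarke_subdiff f z zeta.
  by move=> w; apply: le_trans (clarke_ddr_le_dd z w); rewrite lee_fin.
exact: le_trans (edot_le_enorm zeta v) (ler_wpM2r (enorm_ge0 v) (zetaM _ zeta_sub)).
Qed.

End ClarkeDerivative.

Theorem lemma3p3 (R : realType) (d : nat) (f : 'rV[R]_d -> R)
  (R1 R2 : R) (m : nat) :
  SPB f R1 R2 m ->
  forall x y : 'rV[R]_d,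
    `|f x - f y| <=
      (2 ^+ m / 2 * R1 * enorm x ^+ m + 2 ^+ m / 2 * R1 * enorm (y - x) ^+ m + R2)
      * enorm (x - y).
Proof.
move=> [R1_ge0 _ _ f_lip fbound] x y.
set B := (X in X * _).
have segment_le s v : 0 <= s <= 1 -> clarke_ddr f (x + s *: (y - x)) v <= B * enorm v.
  move=> s01; apply: le_trans (clarke_ddr_le_subdiff_bound f_lip (fbound _) v) _.
  apply: ler_wpM2r; first exact: enorm_ge0.
  have := ler_wpM2l R1_ge0 (enorm_segment_expn x (y - x) m s01).
  by rewrite /B; lra.
have [s1 s1_01 le_xy] := clarke_mvt f_lip x y.
have [s2 s2_01 le_yx] := clarke_mvt f_lip y x.
have y_to_x : y + s2 *: (x - y) = x + (1 - s2) *: (y - x).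
  by apply/rowP => i; rewrite !mxE; ring.
rewrite ler_norml; apply/andP; split.
  rewrite lerNl opprB (enormB x y); apply: le_trans le_xy (segment_le _ _ s1_01).
apply: le_trans le_yx _; rewrite y_to_x segment_le //; lra.
Qed.
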